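(* For any $L\in\mathcal{L}$ and any $\gamma$-point, the 1-form $\operatorname{tr}(L\omega)$ has at most a simple pole at $\gamma$, and $\operatorname{res}_\gamma\operatorname{tr}(L\omega)=2(\kappa_1+\kappa_2)(L)$.
   Context: $\mathfrak{g}=G_2$ is realized as $7\times7$ matrices $\begin{pmatrix} 0 & -\sqrt{2}a_2^t & -\sqrt{2}a_1^t \\ \sqrt{2}a_1 & A & [a_2] \\ \sqrt{2}a_2 & [a_1] & -A^t \end{pmatrix}$ ($a_i\in\mathbb{C}^3$, $A$ traceless $3\times3$, $[x]$ the skew-symmetric matrix with $[x]y=x\times y$). $\mathcal{L}$ is the Lie algebra of $\mathfrak{g}$-valued meromorphic functions on a Riemann surface with marked points $P_i,Q_j,\gamma_s$, holomorphic outside them, such that at each $\gamma$ (with fixed $\alpha_1,\alpha_2\in\mathbb{C}^3$, $\alpha_1^t\alpha_2=0$, local coordinate $z$) $L=L_{-2}z^{-2}+L_{-1}z^{-1}+L_0+L_1z+\ldots$ with $L_{-2}=\mu\,\mathrm{diag}(0,\alpha_1\alpha_2^t,-\alpha_2\alpha_1^t)$; $L_{-1}=\begin{pmatrix} 0 & -\sqrt{2}\beta_{02}\alpha_2^t & -\sqrt{2}\beta_{01}\alpha_1^t \\ \sqrt{2}\beta_{01}\alpha_1 & \alpha_1\beta_2^t-\beta_1\alpha_2^t & \beta_{02}[\alpha_2] \\ \sqrt{2}\beta_{02}\alpha_2 & \beta_{01}[\alpha_1] & \alpha_2\beta_1^t-\beta_2\alpha_1^t \end{pmatrix}$ with $\alpha_1^t\beta_2=\alpha_2^t\beta_1=0$;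 $L_0$ with entries $a_1,a_2,A$ satisfying $\alpha_1^ta_2=\alpha_2^ta_1=0$, $A\alpha_1=\kappa_1\alpha_1$, $-A^t\alpha_2=\kappa_2\alpha_2$ (these $\kappa_1,\kappa_2$ are denoted $\kappa_1(L),\kappa_2(L)$, and $(\kappa_1+\kappa_2)(L)=\kappa_1(L)+\kappa_2(L)$); and the $(2,2)$ block $B$ of $L_1$ satisfying $\alpha_2^tB\alpha_1=0$. $\omega$ is a $\mathfrak{g}$-valued 1-form with expansion $\omega=\omega_{-1}\frac{dz}{z}+\omega_0dz+\omega_1z\,dz+\ldots$ at $\gamma$, where $\omega_{-1}$ has the form of $L_{-1}$ with parameters $\tilde\beta_{01},\tilde\beta_{02},\tilde\beta_1,\tilde\beta_2$ satisfying $\alpha_1^t\tilde\beta_2=1$, $\alpha_2^t\tilde\beta_1=1$; $\omega_0$ has the $G_2$ form with entries $w_1,w_2,W$ satisfying $\alpha_1^tw_2=0$, $\alpha_2^tw_1=0$, $W\alpha_1=\tilde\kappa_1\alpha_1$, $-W^t\alpha_2=\tilde\kappa_2\alpha_2$; and the $(2,2)$ block $W_1$ of $\omega_1$ satisfies $\alpha_2^tW_1\alpha_1=0$. *)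

From HB Require Import structures.
From mathcomp Require Import all_boot all_order all_algebra.
Set Implicit Arguments. Unset Strict Implicit. Unset Printing Implicit Defensive.
Import Order.TTheory GRing.Theory Num.Theory.
Local Open Scope ring_scope.

Section G2.
Variable C : numClosedFieldType.

(* 7 = 1 + (3 + 3): block structure of the G2 realization *)
Notation M7 := 'M[C]_(1 + (3 + 3)).

Definition sqrt2 : C := sqrtC 2.

(* [x] : skew-symmetric matrix with [x] y = x \times y (indices 0,1,2) *)
Definition skew (x : 'cV[C]_3) : 'M[C]_3 :=
  let xe (n : nat) := x (inord n) 0 in
  \matrix_(i < 3, j < 3)
    match nat_of_ord i, nat_of_ord j with
    | 0%N, 1%N => - xe 2%N | 0%N, 2%N => xe 1%N
    | 1%N, 0%N => xe 2%N   | 1%N, 2%N => - xe 0%N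
    | 2%N, 0%N => - xe 1%N | 2%N, 1%N => xe 0%N
    | _, _ => 0
    end.

Definition g2mx (a1 a2 : 'cV[C]_3) (A : 'M[C]_3) : M7 :=
  block_mx (0 : 'M[C]_1) (row_mx (- sqrt2 *: a2^T) (- sqrt2 *: a1^T))
           (col_mx (sqrt2 *: a1) (sqrt2 *: a2))
           (block_mx A (skew a2) (skew a1) (- A^T)).

Definition is_g2 (M : M7) : Prop :=
  exists a1 a2 A, \tr A = 0 /\ M = g2mx a1 a2 A.

Definition minus1_form (al1 al2 : 'cV[C]_3) (b01 b02 : C) (b1 b2 : 'cV[C]_3) : M7 :=
  block_mx (0 : 'M[C]_1) (row_mx (- sqrt2 * b02 *: al2^T) (- sqrt2 * b01 *: al1^T))
           (col_mx (sqrt2 * b01 *: al1) (sqrt2 * b02 *: al2))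
           (block_mx (al1 *m b2^T - b1 *m al2^T) (b02 *: skew al2)
                     (b01 *: skew al1) (al2 *m b1^T - b2 *m al1^T)).

Definition minus2_form (al1 al2 : 'cV[C]_3) (mu : C) : M7 :=
  mu *: block_mx (0 : 'M[C]_1) 0 0
        (block_mx (al1 *m al2^T) 0 0 (- (al2 *m al1^T))).

Definition blk22 (M : M7) : 'M[C]_3 := ulsubmx (drsubmx M).

(* Coefficient of z^k dz in tr(L omega), where L = sum_i Lc i z^i (Lc i = 0 for i < -2)
   and omega = sum_j Wc j z^j dz (Wc j = 0 for j < -1): Cauchy product
   sum_{i = -2}^{k+1} tr(Lc i * Wc (k - i)). *)
Definition tr_coef (Lc Wc : int -> M7) (k : int) : C :=
  \sum_(i < absz (Num.max (0 : int) (k + 4)%R)) \tr (Lc (i%:Z - 2) *m Wc (k - (i%:Z - 2))).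

End G2.

From Pilot Require Import Defs.
From HB Require Import structures.
From mathcomp Require Import all_boot all_order all_algebra ring zify.
Import Order.TTheory GRing.Theory Num.Theory.
Set Implicit Arguments. Unset Strict Implicit. Unset Printing Implicit Defensive.
Local Open Scope ring_scope.

(* Every coefficient involved has the shape g2mx x1 x2 X, and on such matrices
   the trace form is tr(MN) = 2 tr(XY) - 6 (x1.y2 + x2.y1).  Only the terms
   L_{-2} w_0, L_{-1} w_{-1} (order -2), L_{-2} w_{-1} (order -3) and
   L_{-2} w_1, L_{-1} w_0, L_0 w_{-1} (order -1) can contribute below order 0.
   The conditions at gamma make each of them vanish, except L_0 w_{-1}, whose
   trace is 2 (tb2^T A al1 - al2^T A tb1) = 2 (kap1 + kap2) by the eigenvector
   conditions on A and the normalisations al1.tb2 = al2.tb1 = 1. *)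

Section G2TraceForm.
Variable C : numClosedFieldType.
Implicit Types (x y : 'cV[C]_3) (X Y : 'M[C]_3).

Lemma trmxZ m n (c : C) (M : 'M[C]_(m, n)) : (c *: M)^T = c *: M^T.
Proof. exact: linearZ. Qed.

Lemma mxtrace_dotC x y : \tr (x^T *m y) = \tr (y^T *m x).
Proof. by rewrite -mxtrace_tr trmx_mul trmxK. Qed.

(* [Defs.skew] is qualified because MathComp also exports a [skew]. *)
Lemma skewZ (c : C) x : Defs.skew (c *: x) = c *: Defs.skew x.
Proof.
apply/matrixP=> i j; rewrite !mxE.
by case: i => [[|[|[|?]]] ?]; case: j => [[|[|[|?]]] ?]; rewrite /= ?mxE ?mulrN ?mulr0.
Qed.

Lemma skew0 : Defs.skew (0 : 'cV[C]_3) = 0.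
Proof. by rewrite -(scale0r 0) skewZ scale0r. Qed.

Lemma mxtrace_skew_mul x y : \tr (Defs.skew x *m Defs.skew y) = - 2 * \tr (x^T *m y).
Proof.
rewrite /mxtrace /Defs.skew !big_ord_recr big_ord0 /= !mxE !big_ord_recr !big_ord0 /= !mxE /=.
have -> : widen_ord (leqnSn 2) (widen_ord (leqnSn 1) ord_max) = inord 0 :> 'I_3
  by apply/val_inj; rewrite /= inordK.
have -> : widen_ord (leqnSn 2) ord_max = inord 1 :> 'I_3 by apply/val_inj; rewrite /= inordK.
have -> : ord_max = inord 2 :> 'I_3 by apply/val_inj; rewrite /= inordK.
have -> : ord_max = 0 :> 'I_1 by apply/val_inj.
ring.
Qed.

Lemma mxtrace_g2mx_mul x1 x2 y1 y2 X Y :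
  \tr (g2mx x1 x2 X *m g2mx y1 y2 Y) =
  2 * \tr (X *m Y) - 6 * (\tr (x1^T *m y2) + \tr (x2^T *m y1)).
Proof.
rewrite /g2mx !mulmx_block mul_row_col mul_col_row add_block_mx !mxtrace_block.
rewrite mulmx0 add0r !mxtraceD -!scalemxAl -!scalemxAr !mxtraceZ !mxtrace_skew_mul.
rewrite mulNmx mulmxN opprK (mxtrace_mulC x1) (mxtrace_mulC x2) (mxtrace_mulC X^T).
rewrite -trmx_mul mxtrace_tr (mxtrace_dotC y2) (mxtrace_dotC y1).
have sqrt2_sqr : sqrt2 C * sqrt2 C = 2 by rewrite /sqrt2 -expr2 sqrtCK.
rewrite !mulNr !mulrN !mulrA sqrt2_sqr; ring.
Qed.

Lemma blk22_g2mx x1 x2 X : blk22 (g2mx x1 x2 X) = X.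
Proof. by rewrite /blk22 /g2mx block_mxKdr block_mxKul. Qed.

Lemma minus1_formE al1 al2 (c01 c02 : C) c1 c2 :
  minus1_form al1 al2 c01 c02 c1 c2 =
  g2mx (c01 *: al1) (c02 *: al2) (al1 *m c2^T - c1 *m al2^T).
Proof.
rewrite /minus1_form /g2mx !skewZ !trmxZ !scalerA.
congr (block_mx _ _ _ (block_mx _ _ _ _)).
by rewrite raddfB /= !trmx_mul !trmxK opprB.
Qed.

Lemma minus2_formE al1 al2 (mu : C) :
  minus2_form al1 al2 mu = g2mx 0 0 (mu *: (al1 *m al2^T)).
Proof.
rewrite /minus2_form /g2mx !skew0 !trmx0 !scaler0 row_mx0 col_mx0 scale_block_mx.
congr block_mx; try by apply/matrixP=> i j; rewrite !mxE mulr0.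
rewrite scale_block_mx trmxZ trmx_mul trmxK scalerN.
by congr block_mx; apply/matrixP=> i j; rewrite !mxE mulr0.
Qed.

Lemma mxtrace_minus2_g2mx al1 al2 (mu : C) y1 y2 Y :
  \tr (minus2_form al1 al2 mu *m g2mx y1 y2 Y) = 2 * mu * \tr (al2^T *m Y *m al1).
Proof.
rewrite minus2_formE mxtrace_g2mx_mul !trmx0 !mul0mx mxtrace0 -scalemxAl mxtraceZ.
by rewrite -mulmxA mxtrace_mulC; ring.
Qed.

Lemma tr_coef_low (Lc Wc : int -> 'M[C]_(1 + (3 + 3))) k :
  k + 4 <= 0 -> tr_coef Lc Wc k = 0.
Proof. by move=> k_small; rewrite /tr_coef (max_idPl k_small) big_ord0. Qed.

Lemma tr_coefN3 (Lc Wc : int -> 'M[C]_(1 + (3 + 3))) :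
  tr_coef Lc Wc (-3) = \tr (Lc (-2) *m Wc (-1)).
Proof. by rewrite /tr_coef /= big_ord_recr big_ord0 /= add0r. Qed.

Lemma tr_coefN2 (Lc Wc : int -> 'M[C]_(1 + (3 + 3))) :
  tr_coef Lc Wc (-2) = \tr (Lc (-2) *m Wc 0) + \tr (Lc (-1) *m Wc (-1)).
Proof. by rewrite /tr_coef /= !big_ord_recr big_ord0 /= add0r. Qed.

Lemma tr_coefN1 (Lc Wc : int -> 'M[C]_(1 + (3 + 3))) :
  tr_coef Lc Wc (-1) =
  \tr (Lc (-2) *m Wc 1) + \tr (Lc (-1) *m Wc 0) + \tr (Lc 0 *m Wc (-1)).
Proof. by rewrite /tr_coef /= !big_ord_recr big_ord0 /= add0r. Qed.

Lemma perp_sym x y : x^T *m y = 0 -> y^T *m x = 0.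
Proof. by move=> xy0; rewrite -[x]trmxK -trmx_mul xy0 trmx0. Qed.

Lemma trmx_eigen X x (k : C) : - X^T *m x = k *: x -> x^T *m X = - (k *: x^T).
Proof.
move=> eigen; apply/eqP; rewrite -eqr_oppLR; apply/eqP.
by have := congr1 trmx eigen; rewrite trmx_mul trmxZ raddfN /= trmxK mulmxN.
Qed.

Section GammaPoint.
Variables al1 al2 : 'cV[C]_3.
Hypothesis al1_perp_al2 : al1^T *m al2 = 0.

Let al2_perp_al1 : al2^T *m al1 = 0. Proof. exact: perp_sym. Qed.

Lemma mxtrace_minus2_minus1 (mu c01 c02 : C) c1 c2 :
  \tr (minus2_form al1 al2 mu *m minus1_form al1 al2 c01 c02 c1 c2) = 0.
Proof.
rewrite minus1_formE mxtrace_minus2_g2mx mulmxBr mulmxBl !mulmxA al2_perp_al1.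
by rewrite -!mulmxA al2_perp_al1 !mulmx0 !mul0mx subr0 mxtrace0 mulr0.
Qed.

Lemma mxtrace_minus1_mul (b01 b02 c01 c02 : C) b1 b2 c1 c2 :
  al1^T *m b2 = 0 -> al2^T *m b1 = 0 ->
  \tr (minus1_form al1 al2 b01 b02 b1 b2 *m minus1_form al1 al2 c01 c02 c1 c2) = 0.
Proof.
move=> /perp_sym b2_perp_al1 al2_perp_b1.
rewrite !minus1_formE mxtrace_g2mx_mul !trmxZ -!scalemxAl -!scalemxAr !mxtraceZ.
rewrite al1_perp_al2 al2_perp_al1 mxtrace0 mulmxBl !mulmxBr !raddfB /= !mulmxA.
rewrite -(mulmxA al1 b2^T al1) b2_perp_al1 -(mulmxA b1 al2^T al1) al2_perp_al1.
rewrite (mxtrace_mulC (al1 *m b2^T *m c1)) (mxtrace_mulC (b1 *m al2^T *m c1)) !mulmxA.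
by rewrite al2_perp_al1 al2_perp_b1 !mulmx0 !mul0mx !mxtrace0; ring.
Qed.

Lemma mxtrace_minus2_eigen (mu k : C) x1 x2 X : X *m al1 = k *: al1 ->
  \tr (minus2_form al1 al2 mu *m g2mx x1 x2 X) = 0.
Proof.
move=> X_al1; rewrite mxtrace_minus2_g2mx -mulmxA X_al1 -scalemxAr al2_perp_al1.
by rewrite scaler0 mxtrace0 mulr0.
Qed.

Section CoefficientZero.
Variables (x1 x2 : 'cV[C]_3) (X : 'M[C]_3) (k1 k2 : C).
Hypotheses (al1_perp_x2 : al1^T *m x2 = 0) (al2_perp_x1 : al2^T *m x1 = 0).
Hypotheses (X_al1 : X *m al1 = k1 *: al1) (XT_al2 : - X^T *m al2 = k2 *: al2).

Lemma mxtrace_minus1_coef0 (b01 b02 : C) b1 b2 :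
  al1^T *m b2 = 0 -> al2^T *m b1 = 0 ->
  \tr (minus1_form al1 al2 b01 b02 b1 b2 *m g2mx x1 x2 X) = 0.
Proof.
move=> /perp_sym b2_perp_al1 al2_perp_b1.
rewrite minus1_formE mxtrace_g2mx_mul !trmxZ -!scalemxAl !mxtraceZ al1_perp_x2 al2_perp_x1.
rewrite mulmxBl raddfB /= -(mulmxA al1) (mxtrace_mulC al1) -mulmxA X_al1 -scalemxAr.
rewrite b2_perp_al1 -(mulmxA b1) (trmx_eigen XT_al2) (mxtrace_mulC b1) mulNmx.
by rewrite -scalemxAl al2_perp_b1 !scaler0 oppr0 !mxtrace0; ring.
Qed.

Lemma mxtrace_coef0_minus1 (c01 c02 : C) c1 c2 :
  al1^T *m c2 = 1 -> al2^T *m c1 = 1 ->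
  \tr (g2mx x1 x2 X *m minus1_form al1 al2 c01 c02 c1 c2) = 2 * (k1 + k2).
Proof.
move=> al1_c2 al2_c1.
rewrite minus1_formE mxtrace_g2mx_mul -!scalemxAr !mxtraceZ (mxtrace_dotC x1 al2).
rewrite (mxtrace_dotC x2 al1) al2_perp_x1 al1_perp_x2 mxtrace0 mulmxBr raddfB /= !mulmxA.
rewrite X_al1 -scalemxAl mxtraceZ mxtrace_mulC (mxtrace_dotC c2) al1_c2.
rewrite (mxtrace_mulC (X *m c1)) mulmxA (trmx_eigen XT_al2) mulNmx -scalemxAl al2_c1.
by rewrite raddfN /= mxtraceZ mxtrace1; ring.
Qed.

End CoefficientZero.
End GammaPoint.
End G2TraceForm.

Theorem lemma5p3 (C : numClosedFieldType)
  (* data at the gamma-point *)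
  (al1 al2 : 'cV[C]_3) (Hal : al1^T *m al2 = 0)
  (* Laurent coefficients of L at gamma *)
  (Lc : int -> 'M[C]_(1 + (3 + 3)))
  (HLg2 : forall i, is_g2 (Lc i))
  (HLlow : forall i : int, i < -2 -> Lc i = 0)
  (mu : C) (HLm2 : Lc (-2) = minus2_form al1 al2 mu)
  (b01 b02 : C) (b1 b2 : 'cV[C]_3)
  (Hb : al1^T *m b2 = 0 /\ al2^T *m b1 = 0)
  (HLm1 : Lc (-1) = minus1_form al1 al2 b01 b02 b1 b2)
  (a1 a2 : 'cV[C]_3) (A : 'M[C]_3) (kap1 kap2 : C)
  (HL0 : Lc 0 = g2mx a1 a2 A)
  (HL0c : al1^T *m a2 = 0 /\ al2^T *m a1 = 0 /\
          A *m al1 = kap1 *: al1 /\ - A^T *m al2 = kap2 *: al2)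
  (HL1 : al2^T *m blk22 (Lc 1) *m al1 = 0)
  (* Laurent coefficients of omega at gamma (omega = sum_j Wc j z^j dz) *)
  (Wc : int -> 'M[C]_(1 + (3 + 3)))
  (HWg2 : forall j, is_g2 (Wc j))
  (HWlow : forall j : int, j < -1 -> Wc j = 0)
  (tb01 tb02 : C) (tb1 tb2 : 'cV[C]_3)
  (Htb : al1^T *m tb2 = 1 /\ al2^T *m tb1 = 1)
  (HWm1 : Wc (-1) = minus1_form al1 al2 tb01 tb02 tb1 tb2)
  (w1 w2 : 'cV[C]_3) (W : 'M[C]_3) (tkap1 tkap2 : C)
  (HW0 : Wc 0 = g2mx w1 w2 W)
  (HW0c : al1^T *m w2 = 0 /\ al2^T *m w1 = 0 /\
          W *m al1 = tkap1 *: al1 /\ - W^T *m al2 = tkap2 *: al2)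
  (HW1 : al2^T *m blk22 (Wc 1) *m al1 = 0) :
  (forall k : int, k <= -2 -> tr_coef Lc Wc k = 0) /\
  tr_coef Lc Wc (-1) = 2 * (kap1 + kap2).
Proof.
(* tr_coef only reads L_i for i >= -2 and w_j for j >= -1, and at order -1 it
   stops at L_0. *)
case: Hb => Hb2 Hb1; case: Htb => Htb2 Htb1.
case: HL0c => Ha2 [Ha1 [HA HAt]]; case: HW0c => Hw2 [Hw1 [HW HWt]].
have [v1 [v2 [V [_ HV]]]] := HWg2 1.
rewrite HV blk22_g2mx in HW1.
split=> [k k_le|].
  have [->|k_neq2] := eqVneq k (-2).
    rewrite tr_coefN2 HLm2 HLm1 HW0 HWm1 (mxtrace_minus2_eigen Hal _ _ _ HW).
    by rewrite mxtrace_minus1_mul ?addr0.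
  have [->|k_neq3] := eqVneq k (-3).
    by rewrite tr_coefN3 HLm2 HWm1 mxtrace_minus2_minus1.
  apply: tr_coef_low; lia.
rewrite tr_coefN1 HLm2 HLm1 HV HW0 HWm1 HL0 mxtrace_minus2_g2mx HW1 mxtrace0 mulr0.
rewrite (mxtrace_minus1_coef0 Hw2 Hw1 HW HWt) // !add0r.
by rewrite (mxtrace_coef0_minus1 Ha2 Ha1 HA HAt).
Qed.
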